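(* Let $a\in\mathbb{N}$ and $b,d\in\mathbb{Z}$. Suppose there is a prime $p$ with $v_p(a)>\max\{v_p(b),v_p(d)\}$ and $v_p(b)\neq v_p(d)$. Then there exists a completely multiplicative function $f:\mathbb{N}\to\mathbb{S}^1$ such that $$\liminf_{n\to\infty}|f(an+b)-f(an+d)|>0.$$
   Context: $\mathbb{N}=\{1,2,\dots\}$, $\mathbb{S}^1$ the unit circle; completely multiplicative means $f(mn)=f(m)f(n)$. $v_p$ is the $p$-adic valuation (with $v_p(0)=\infty$). The expression is considered for $n$ large enough that $an+b,an+d\ge1$. *)

From HB Require Import structures.
From mathcomp Require Import all_boot all_order all_algebra.
From mathcomp Require Import all_classical all_reals all_analysis.
From mathcomp Require Export complex.
Set Implicit Arguments. Unset Strict Implicit. Unset Printing Implicit Defensive.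
Import Order.TTheory GRing.Theory Num.Theory.
Local Open Scope ring_scope.

(* Completely multiplicative function N={1,2,...} -> S^1 (values in R[i]).
   f is represented as a function on nat; its value at 0 is irrelevant. *)
Definition cm_unimodular (R : realType) (f : nat -> R[i]) : Prop :=
  (forall m n : nat, (0 < m)%N -> (0 < n)%N -> f (m * n)%N = f m * f n) /\
  (forall n : nat, (0 < n)%N -> Normc.normc (f n) = 1).

From HB Require Import structures.
From mathcomp Require Import all_boot all_order all_algebra.
From mathcomp Require Import all_classical all_reals all_analysis.
From mathcomp Require Import complex.
Import Order.TTheory GRing.Theory Num.Theory.
Local Open Scope ring_scope.

(* Since p^(v_p(a)) divides a and v_p(a) > v_p(b), v_p(d), the valuations
   v_p(an+b) = v_p(b) and v_p(an+d) = v_p(d) do not depend on n.  Hence for a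
   unimodular w, the completely multiplicative function f(n) = w^(v_p(n))
   takes the constant values w^(v_p(b)) and w^(v_p(d)) along the two
   progressions, and these differ once w is a primitive 2|v_p(b) - v_p(d)|-th
   root of unity. *)

Lemma logn_addl_dvdz (p : nat) (x y : int) : prime p -> x != 0 ->
  ((p ^ (logn p (absz x)).+1)%:Z %| y)%Z -> logn p (absz (y + x)) = logn p (absz x).
Proof.
move=> p_pr x_neq0 dvd_y; set e := logn p (absz x).
have x_gt0 : (0 < absz x)%N by rewrite absz_gt0.
have dvd_x : ((p ^ e)%:Z %| x)%Z by rewrite dvdzE /= pfactor_dvdnn.
have ndvd_x : ~~ ((p ^ e.+1)%:Z %| x)%Z.
  by rewrite dvdzE /= pfactor_dvdn // ltnn.
have dvd_yx : ((p ^ e)%:Z %| y + x)%Z.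
  rewrite rpredD //; apply: dvdz_trans dvd_y.
  by rewrite dvdzE /= dvdn_exp2l.
have ndvd_yx : ~~ ((p ^ e.+1)%:Z %| y + x)%Z.
  by apply: contra ndvd_x => dvd_e1; rewrite -(addKr y x) rpredD ?rpredN.
have yx_gt0 : (0 < absz (y + x)%R)%N.
  by rewrite absz_gt0; apply: contra ndvd_yx => /eqP ->; apply: dvdz0.
move: dvd_yx ndvd_yx; rewrite !dvdzE /= !pfactor_dvdn // -leqNgt => le1 le2.
by apply/eqP; rewrite eqn_leq le1 le2.
Qed.

Lemma logn_affine (p a n : nat) (x : int) : prime p -> (0 < a)%N -> x != 0 ->
  (logn p (absz x) < logn p a)%N -> logn p (absz (a%:Z * n%:Z + x)) = logn p (absz x).
Proof.
move=> p_pr a_gt0 x_neq0 lt_x_a; apply: logn_addl_dvdz => //.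
by rewrite dvdz_mulr // dvdzE /= pfactor_dvdn.
Qed.

Lemma normc_gt0 (R : rcfType) (x : R[i]) : x != 0 -> 0 < Normc.normc x.
Proof.
move=> x_neq0; rewrite lt_def; apply/andP; split.
  by apply: contra x_neq0 => /eqP/Normc.eq0_normc ->.
by case: x {x_neq0} => u v; rewrite /Normc.normc sqrtr_ge0.
Qed.

Lemma normc_expr_eq1 (R : rcfType) (w : R[i]) (k : nat) :
  Normc.normc w = 1 -> Normc.normc (w ^+ k) = 1.
Proof.
move=> w1; elim: k => [|k IHk]; first by rewrite expr0 Normc.normc1.
by rewrite exprS Normc.normcM w1 IHk mul1r.
Qed.

Lemma unimodular_expr_neq (R : rcfType) (m n : nat) : m != n ->
  exists2 w : R[i], Normc.normc w = 1 & w ^+ m != w ^+ n.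
Proof.
wlog lt_mn : m n / (m < n)%N.
  move=> hwlog neq_mn; case: (ltngtP m n) => [lt_mn | lt_nm | eq_mn].
  - exact: hwlog.
  - have [|w w1 neq_w] := hwlog n m lt_nm; first by rewrite eq_sym.
    by exists w; rewrite // eq_sym.
  - by rewrite eq_mn eqxx in neq_mn.
move=> _; set D := (n - m)%N; have D_gt0 : (0 < D)%N by rewrite subn_gt0.
set w : R[i] := D.-root (-1); have wD : w ^+ D = -1 by rewrite rootCK.
have w1 : Normc.normc w = 1.
  have normw : `|w| = 1.
    by apply/eqP; rewrite -(pexpr_eq1 D_gt0) // -normrX wD normrN normr1.
  by case: normw.
exists w => //; apply/eqP => wm_eq_wn.
have : w ^+ m *+ 2 == 0.
  by rewrite mulr2n {2}wm_eq_wn -(subnK (ltnW lt_mn)) exprD wD mulN1r subrr.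
rewrite mulrn_eq0 /= => /eqP wm0.
by move: (@normc_expr_eq1 R w m w1); rewrite wm0 Normc.normc0 => /eqP; rewrite eq_sym oner_eq0.
Qed.

Lemma cm_unimodular_expr_logn (R : realType) (p : nat) (w : R[i]) :
  Normc.normc w = 1 -> cm_unimodular (fun n => w ^+ logn p n).
Proof.
move=> w1; split => [m n m_gt0 n_gt0 | n _]; last exact: normc_expr_eq1.
by rewrite lognM // exprD.
Qed.

Lemma limn_einf_cst (R : realType) (c : \bar R) : limn_einf (fun _ : nat => c) = c.
Proof. exact: (cvg_limn_einf_sup (cvg_cst c)).1. Qed.

Theorem lemma4p3 (R : realType) (a : nat) (b d : int) (p : nat) :
  (0 < a)%N -> prime p -> b != 0 -> d != 0 ->
  (maxn (logn p (absz b)) (logn p (absz d)) < logn p a)%N ->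
  logn p (absz b) != logn p (absz d) ->
  exists f : nat -> R[i], cm_unimodular f /\
    (0 < limn_einf (fun n : nat =>
       (Normc.normc (f (absz (a%:Z * n%:Z + b)) - f (absz (a%:Z * n%:Z + d))))%:E))%E.
Proof.
move=> a_gt0 p_pr b_neq0 d_neq0; rewrite gtn_max => /andP[lt_b_a lt_d_a] neq_bd.
have [w w1 neq_w] := @unimodular_expr_neq R _ _ neq_bd.
exists (fun n => w ^+ logn p n); split; first exact: cm_unimodular_expr_logn.
under eq_fun => n do rewrite !logn_affine //.
by rewrite limn_einf_cst lte_fin normc_gt0 // subr_eq0.
Qed.
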